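(* Let $(G,\delta)$ be a nilpotent $\mathbb Q$-scalable group of step $s$ that is generated as a group by $\{\delta_q(x_i):q\in\mathbb Q,1\le i\le r\}$ for some $x_1,\dots,x_r\in V_1(G)$. Then $G^{(s)}$, equipped with the $\mathbb Q$-vector space structure $\sigma$ (where $\sigma_q=\delta_q$ if $s=1$ and $\sigma_{n/m}(z)=\delta_m^{-1}(z^{nm^{s-1}})$ for $n\in\mathbb Z,m\in\mathbb N$ if $s\ge2$), is finite dimensional.
   Context: A $\mathbb Q$-scalable group is a group $G$ with a map $\delta\colon\mathbb Q\times G\to G$ such that $\delta_\lambda$ is an automorphism for $\lambda\ne0$, $\delta_\lambda\circ\delta_\mu=\delta_{\lambda\mu}$, and $\delta_0\equiv e_G$. $V_1(G):=\{p:\delta_{t+s}(p)=\delta_t(p)\delta_s(p)\ \forall t,s\in\mathbb Q\}$. $[g,h]=ghg^{-1}h^{-1}$; $G^{(1)}=G$, $G^{(k)}=\langle[G,G^{(k-1)}]\rangle$; step $s$ means $G^{(s+1)}=\{e\}\ne G^{(s)}$. The map $\sigma$ above is known to make the abelian group $G^{(s)}$ a $\mathbb Q$-vector space. *)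

From HB Require Import structures.
From mathcomp Require Import all_boot all_order all_algebra.
Set Implicit Arguments. Unset Strict Implicit. Unset Printing Implicit Defensive.
Import Order.TTheory GRing.Theory Num.Theory.

Section Defs.
Variables (G : Type) (mul : G -> G -> G) (inv : G -> G) (e : G).

Record is_group : Prop := IsGroup {
  mulA : forall x y z, mul x (mul y z) = mul (mul x y) z;
  mul1g : forall x, mul e x = x;
  mulg1 : forall x, mul x e = x;
  mulVg : forall x, mul (inv x) x = e;
  mulgV : forall x, mul x (inv x) = e }.

Definition is_group_hom (f : G -> G) : Prop :=
  forall x y, f (mul x y) = mul (f x) (f y).
Definition is_group_aut (f : G -> G) : Prop :=
  is_group_hom f /\ bijective f.

Definition Qscalable (delta : rat -> G -> G) : Prop :=
  [/\ (forall l : rat, l != 0%R -> is_group_aut (delta l)),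
      (forall (l m : rat) x, delta l (delta m x) = delta (l * m)%R x)
    & (forall x, delta 0%R x = e)].

Definition V1 (delta : rat -> G -> G) (p : G) : Prop :=
  forall t s : rat, delta (t + s)%R p = mul (delta t p) (delta s p).

Definition commg (g h : G) : G := mul (mul (mul g h) (inv g)) (inv h).

Inductive gen (S : G -> Prop) : G -> Prop :=
| gen_one : gen S e
| gen_in x : S x -> gen S x
| gen_mul x y : gen S x -> gen S y -> gen S (mul x y)
| gen_inv x : gen S x -> gen S (inv x).

(* lower central series: lcs 1 = G, lcs (k+1) = <[G, lcs k]>;
   lcs 0 is also set to G (unused convention) *)
Fixpoint lcs (k : nat) : G -> Prop :=
  match k with
  | 0 => fun _ => True
  | 1 => fun _ => True
  | k'.+1 => gen (fun z => exists g h, lcs k' h /\ z = commg g h)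
  end.

Definition nilpotent_step (s : nat) : Prop :=
  (forall x, lcs s.+1 x -> x = e) /\ (exists x, lcs s x /\ x <> e).

Definition zpow (x : G) (z : int) : G :=
  match z with
  | Posz n => iter n (mul x) e
  | Negz n => inv (iter n.+1 (mul x) e)
  end.

(* the scalar multiplication sigma on G^(s): sigma_q = delta_q if s = 1,
   and sigma_{n/m}(z) = delta_m^{-1}(z^(n m^(s-1))) if s >= 2, with
   q = n/m in lowest terms (n = numq q, m = denq q > 0);
   delta_m^{-1} = delta_{1/m} *)
Definition sigma (delta : rat -> G -> G) (s : nat) (q : rat) (z : G) : G :=
  if s == 1 then delta q z
  else delta ((denq q)%:~R^-1)%R (zpow z (numq q * (denq q) ^+ (s - 1))%R).

(* finite dimensionality of the Q-vector space (G^(s), mul, sigma):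
   it has a finite spanning family *)
Definition fin_dim_lcs (delta : rat -> G -> G) (s : nat) : Prop :=
  exists (k : nat) (zs : 'I_k -> G), (forall i, lcs s (zs i)) /\
    forall z, lcs s z -> exists qs : 'I_k -> rat,
      z = foldr (fun i acc => mul (sigma delta s (qs i) (zs i)) acc) e
                (enum 'I_k).

End Defs.

From Pilot Require Import Defs.
From HB Require Import structures.
From mathcomp Require Import all_boot all_order all_algebra.
From mathcomp Require Import ring zify.
Set Implicit Arguments. Unset Strict Implicit. Unset Printing Implicit Defensive.
Import Order.TTheory GRing.Theory Num.Theory.

(* The proof follows the classical description of the lower central series
   by iterated commutators.
   - Modulo G^(k+2), the commutator map G x G^(k) -> G^(k+1) is bilinear;
     hence G^(k+1) is generated modulo G^(k+2) by the iterated commutators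
     [y_0,[y_1,..,y_k]] of generators, and such an iterated commutator of
     integer powers is, modulo G^(k+2), the power of the iterated
     commutator by the product of the exponents.
   - When G^(s+1) = 1, the group G^(s) is central and the congruences become
     equalities.  Since delta_t p = p^t for p in V_1(G) and t an integer,
     every w in G^(s) satisfies delta_t w = w^(t^s); this identifies the
     scalar multiplication sigma as sigma_q z = delta_(1/M)(z^A) whenever
     q M^s = A, and shows that sigma is additive and central.
   - Clearing denominators, an iterated commutator of s dilated generators
     delta_(q_i)(x_(j_i)) is sigma_(q_1..q_s) of [x_(j_1),[..,x_(j_s)]], so
     these finitely many commutators of the x_j span G^(s). *)

Section NilpotentGroup.
Variables (G : Type) (mul : G -> G -> G) (inv : G -> G) (e : G).
Hypothesis HG : is_group mul inv e.
Local Notation "a ° b" := (mul a b) (at level 40, left associativity).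
Local Notation zp := (Defs.zpow mul inv e).
Local Notation cm := (Defs.commg mul inv).
Local Notation L k := (Defs.lcs mul inv e k).
Local Notation gn := (Defs.gen mul inv e).
Local Notation hom := (is_group_hom mul).

Lemma gmulA a b c : a ° (b ° c) = a ° b ° c. Proof. exact: (Defs.mulA HG). Qed.
Lemma gmul1l a : e ° a = a. Proof. exact: (Defs.mul1g HG). Qed.
Lemma gmul1r a : a ° e = a. Proof. exact: (Defs.mulg1 HG). Qed.
Lemma gmulVl a : inv a ° a = e. Proof. exact: (Defs.mulVg HG). Qed.
Lemma gmulVr a : a ° inv a = e. Proof. exact: (Defs.mulgV HG). Qed.
Lemma gmulK a b : a ° b ° inv b = a. Proof. by rewrite -gmulA gmulVr gmul1r. Qed.
Lemma gmulVK a b : a ° inv b ° b = a. Proof. by rewrite -gmulA gmulVl gmul1r. Qed.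
Lemma gmulKl a b : a ° (inv a ° b) = b. Proof. by rewrite gmulA gmulVr gmul1l. Qed.
Lemma gmulVKl a b : inv a ° (a ° b) = b. Proof. by rewrite gmulA gmulVl gmul1l. Qed.
Lemma gmulIr a b c : a ° c = b ° c -> a = b.
Proof. by move=> h; rewrite -(gmulK a c) h gmulK. Qed.
Lemma gmulIl a b c : c ° a = c ° b -> a = b.
Proof. by move=> h; rewrite -(gmulVKl c a) h gmulVKl. Qed.
Lemma ginv_uniq a b : a ° b = e -> a = inv b.
Proof. by move=> h; apply: (@gmulIr _ _ b); rewrite h gmulVl. Qed.
Lemma ginvK a : inv (inv a) = a.
Proof. by symmetry; apply: ginv_uniq; rewrite gmulVr. Qed.
Lemma ginvM a b : inv (a ° b) = inv b ° inv a.
Proof. by symmetry; apply: ginv_uniq; rewrite -gmulA gmulVKl gmulVl. Qed.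
Lemma ginv1 : inv e = e.
Proof. by symmetry; apply: ginv_uniq; rewrite gmul1l. Qed.

Lemma hom1 f : hom f -> f e = e.
Proof. by move=> hf; apply: (@gmulIr _ _ (f e)); rewrite -hf !gmul1l. Qed.
Lemma homV f : hom f -> forall a, f (inv a) = inv (f a).
Proof. by move=> hf a; apply: ginv_uniq; rewrite -hf gmulVl hom1. Qed.
Lemma hom_commg f : hom f -> forall a b, f (cm a b) = cm (f a) (f b).
Proof. by move=> hf a b; rewrite /Defs.commg !hf !(homV hf). Qed.

Definition central a := forall g, a ° g = g ° a.
Lemma central1 : central e. Proof. by move=> g; rewrite gmul1l gmul1r. Qed.
Lemma centralM a b : central a -> central b -> central (a ° b).
Proof. by move=> ha hb g; rewrite -gmulA hb gmulA ha gmulA. Qed.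
Lemma centralV a : central a -> central (inv a).
Proof.
by move=> ha g; apply: (@gmulIl _ _ a); rewrite gmulA gmulVr gmul1l ha gmulVK.
Qed.
Lemma central_aut f : hom f -> bijective f -> forall a, central a -> central (f a).
Proof. by move=> hf [f' _ fK] a ha g; rewrite -(fK g) -!hf ha. Qed.

(* Integer powers.  The nonnegative powers are iterated products; the rules
   for integer exponents are reduced to them by writing u = m - n. *)
Definition npow a n := iter n (mul a) e.
Lemma npowD a m n : npow a (m + n) = npow a m ° npow a n.
Proof. by elim: m => [|m IH]; rewrite ?gmul1l // addSn /= IH gmulA. Qed.
Lemma npowC a m n : npow a m ° npow a n = npow a n ° npow a m.
Proof. by rewrite -!npowD addnC. Qed.

Lemma commute_inv a b : a ° b = b ° a -> inv a ° b = b ° inv a.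
Proof. by move=> h; apply: (@gmulIl _ _ a); rewrite gmulKl gmulA h gmulK. Qed.

Lemma zpow_sub a (m n : nat) : zp a (m%:Z - n%:Z) = npow a m ° inv (npow a n).
Proof.
case: (leqP n m) => hnm.
  have -> : (m%:Z - n%:Z = (m - n)%N%:Z)%R by lia.
  by rewrite /= -/(npow a (m - n)) -{2}(subnK hnm) npowD gmulK.
have -> : (m%:Z - n%:Z = Negz (n - m).-1)%R by rewrite NegzE; lia.
have hnm' : (n - m).-1.+1 = n - m by rewrite prednK // subn_gt0.
rewrite /=; change (a ° _) with (npow a (n - m).-1.+1); rewrite hnm'.
by rewrite -{2}(subnK (ltnW hnm)) npowD ginvM gmulA gmulVr gmul1l.
Qed.

Lemma int_diff (u : int) : exists m n : nat, u = (m%:Z - n%:Z)%R.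
Proof.
case: u => [m|n]; first by exists m, 0%N; lia.
by exists 0%N, n.+1; rewrite NegzE; lia.
Qed.

Lemma zpowD a (u v : int) : zp a (u + v)%R = zp a u ° zp a v.
Proof.
have [m [n ->]] := int_diff u; have [m' [n' ->]] := int_diff v.
have -> : (m%:Z - n%:Z + (m'%:Z - n'%:Z) = (m + m')%N%:Z - (n + n')%N%:Z)%R by lia.
rewrite !zpow_sub !npowD ginvM -!gmulA; congr (_ ° _).
have c1 : inv (npow a n) ° npow a m' = npow a m' ° inv (npow a n).
  by apply: commute_inv; exact: npowC.
have c2 : inv (npow a n) ° inv (npow a n') = inv (npow a n') ° inv (npow a n).
  by rewrite -!ginvM npowC.
by rewrite [RHS]gmulA c1 -gmulA c2.
Qed.

Lemma zpow1 a : zp a 1 = a. Proof. by rewrite /= gmul1r. Qed.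
Lemma zpowN a (u : int) : zp a (- u)%R = inv (zp a u).
Proof. by apply: ginv_uniq; rewrite -zpowD addNr. Qed.

(* Most rules below are proved for natural exponents and transported to
   negative ones by zpowN; this induction principle packages the reduction. *)
Lemma zpow_nat_ind (P : int -> Prop) :
  (forall n : nat, P n) -> (forall n : nat, P n -> P (- n%:Z)%R) -> forall u, P u.
Proof. by move=> hP hN [n|n]; [exact: hP | rewrite NegzE; exact: hN]. Qed.

Lemma zpowM a (u v : int) : zp (zp a u) v = zp a (u * v)%R.
Proof.
elim/zpow_nat_ind: v => [n|n IH].
  elim: n => [|n IH]; first by rewrite mulr0.
  rewrite /= -/(zp (zp a u) n) IH -zpowD; congr zp; lia.
by rewrite zpowN IH -zpowN mulrN.
Qed.

Lemma zpow_inv a u : zp (inv a) u = inv (zp a u).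
Proof.
have -> : inv a = zp a (-1) by rewrite zpowN zpow1.
by rewrite zpowM mulN1r zpowN.
Qed.

Lemma zpow_e (u : int) : zp e u = e.
Proof.
elim/zpow_nat_ind: u => [n|n IH]; last by rewrite zpowN IH ginv1.
by elim: n => [|n IH] //=; rewrite gmul1l.
Qed.

Lemma zpow_central a u : central a -> central (zp a u).
Proof.
move=> ha; elim/zpow_nat_ind: u => [n|n hn]; last by rewrite zpowN; exact: centralV.
by elim: n => [|n IH] /=; [exact: central1 | exact: centralM].
Qed.

Lemma zpowMl_central a b u : central a -> zp (a ° b) u = zp a u ° zp b u.
Proof.
move=> ha; elim/zpow_nat_ind: u => [n|n IH]; last first.
  by rewrite !zpowN IH ginvM (centralV (zpow_central _ ha)).
elim: n => [|n IH] /=; first by rewrite gmul1l.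
rewrite -/(zp (a ° b) n) -/(zp a n) -/(zp b n) IH.
by rewrite -!gmulA; congr (_ ° _); rewrite !gmulA (zpow_central n ha).
Qed.

Lemma gen_mono (S T : G -> Prop) : (forall y, S y -> T y) -> forall z, gn S z -> gn T z.
Proof. by move=> hST z; elim=> [|y /hST|y y' _ h1 _ h2|y _ h]; constructor. Qed.

Lemma lcs1 k : L k e.
Proof. by case: k => [|[|k]] //=; constructor. Qed.
Lemma lcsM k a b : L k a -> L k b -> L k (a ° b).
Proof. by case: k => [|[|k]] //= ha hb; apply: gen_mul. Qed.
Lemma lcsV k a : L k a -> L k (inv a).
Proof. by case: k => [|[|k]] //= ha; apply: gen_inv. Qed.
Lemma lcsX k a u : L k a -> L k (zp a u).
Proof.
move=> ha; elim/zpow_nat_ind: u => [n|n hn]; last by rewrite zpowN; exact: lcsV.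
by elim: n => [|n IH] /=; [exact: lcs1 | exact: lcsM].
Qed.

Lemma commg_lcs k g h : L k h -> L k.+1 (cm g h).
Proof. by case: k => [|k] // hh /=; apply: gen_in; exists g, h. Qed.

Lemma lcs_normal k g h : L k h -> L k (g ° h ° inv g).
Proof.
elim: k g h => [//|[//|k] IH] g h /=.
elim=> [|y [a [b [hb ->]]]|y y' _ h1 _ h2|y _ h1].
- by rewrite gmul1r gmulVr; constructor.
- apply: gen_in; exists (g ° a ° inv g), (g ° b ° inv g); split; first exact: IH.
  by rewrite /Defs.commg !ginvM !ginvK -!gmulA !gmulVKl.
- have -> : g ° (y ° y') ° inv g = (g ° y ° inv g) ° (g ° y' ° inv g).
    by rewrite -!gmulA gmulVKl.
  exact: gen_mul.
- have -> : g ° inv y ° inv g = inv (g ° y ° inv g) by rewrite !ginvM ginvK gmulA.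
  exact: gen_inv.
Qed.

Lemma conj_commg g a : g ° a ° inv g = cm g a ° a.
Proof. by rewrite /Defs.commg gmulVK. Qed.

Definition eqmod k u v := L k (u ° inv v).

Lemma eqmod_refl k u : eqmod k u u.
Proof. by rewrite /eqmod gmulVr; exact: lcs1. Qed.
Lemma eqmod_sym k u v : eqmod k u v -> eqmod k v u.
Proof. by move=> /lcsV; rewrite ginvM ginvK. Qed.
Lemma eqmod_trans k u v w : eqmod k u v -> eqmod k v w -> eqmod k u w.
Proof. by move=> h1 h2; rewrite /eqmod -(gmulVK u v) -gmulA; exact: lcsM. Qed.
Lemma eqmodM k u u' v v' : eqmod k u u' -> eqmod k v v' -> eqmod k (u ° v) (u' ° v').
Proof.
move=> h1 h2; rewrite /eqmod ginvM.
have -> : u ° v ° (inv v' ° inv u') = (u ° (v ° inv v') ° inv u) ° (u ° inv u').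
  by rewrite !gmulA gmulVK.
by apply: lcsM => //; exact: lcs_normal.
Qed.
Lemma eqmodV k u v : eqmod k u v -> eqmod k (inv u) (inv v).
Proof.
move=> h; rewrite /eqmod ginvK.
have -> : inv u ° v = inv u ° inv (u ° inv v) ° inv (inv u).
  by rewrite ginvK ginvM ginvK gmulA gmulVK.
by apply: lcs_normal; exact: lcsV.
Qed.
Lemma eqmodX k u v n : eqmod k u v -> eqmod k (zp u n) (zp v n).
Proof.
move=> h; elim/zpow_nat_ind: n => [n|n hn]; last by rewrite !zpowN; exact: eqmodV.
by elim: n => [|n IH] /=; [exact: eqmod_refl | exact: eqmodM].
Qed.

Lemma eqmodP k u v : eqmod k u v -> exists2 n, L k n & u = v ° n.
Proof.
move=> h; exists (inv v ° (u ° inv v) ° inv (inv v)); first exact: lcs_normal.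
by rewrite ginvK !gmulA gmulVr gmul1l gmulVK.
Qed.
Lemma eqmod_mulr k u n : L k n -> eqmod k (u ° n) u.
Proof. exact: lcs_normal. Qed.
Lemma eqmod_invr k a b : eqmod k (a ° b) e -> eqmod k a (inv b).
Proof. by rewrite /eqmod ginvK ginv1 gmul1r. Qed.

Lemma eqmod_conj k g a : L k a -> eqmod k.+1 (g ° a ° inv g) a.
Proof. by move=> h; rewrite /eqmod conj_commg gmulK; exact: commg_lcs. Qed.
Lemma eqmod_comm k a b : L k b -> eqmod k.+1 (a ° b) (b ° a).
Proof. by move=> h; rewrite /eqmod ginvM gmulA; exact: (commg_lcs a h). Qed.

Lemma commgMr g h h' : cm g (h ° h') = cm g h ° (h ° cm g h' ° inv h).
Proof. by rewrite /Defs.commg !ginvM !gmulA gmulVK gmulVK. Qed.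
Lemma commgMl g g' h : cm (g ° g') h = (g ° cm g' h ° inv g) ° cm g h.
Proof. by rewrite /Defs.commg !ginvM !gmulA gmulVK gmulVK. Qed.
Lemma comm1g h : cm e h = e.
Proof. by rewrite /Defs.commg gmul1l ginv1 gmul1r gmulVr. Qed.
Lemma commg1 g : cm g e = e.
Proof. by rewrite /Defs.commg gmul1r gmulVr gmul1l ginv1. Qed.

Lemma commgMr_mod j g c1 c2 : L j c2 -> eqmod j.+2 (cm g (c1 ° c2)) (cm g c1 ° cm g c2).
Proof.
move=> h; rewrite commgMr; apply: eqmodM; first exact: eqmod_refl.
by apply: eqmod_conj; apply: commg_lcs.
Qed.
Lemma commgMl_mod j g g' c : L j c -> eqmod j.+2 (cm (g ° g') c) (cm g c ° cm g' c).
Proof.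
move=> h; rewrite commgMl.
apply: eqmod_trans (_ : eqmod _ _ (cm g' c ° cm g c)) _.
  by apply: eqmodM; [apply: eqmod_conj; apply: commg_lcs | exact: eqmod_refl].
by apply: eqmod_comm; apply: commg_lcs.
Qed.
Lemma commg_eqmod j g u v : eqmod j.+1 u v -> eqmod j.+2 (cm g u) (cm g v).
Proof.
move=> /eqmodP [n hn ->]; rewrite commgMr.
by apply: eqmod_mulr; apply: lcs_normal; apply: commg_lcs.
Qed.

Lemma eqmod_homX (H : G -> Prop) k f :
  H e -> (forall a b, H a -> H b -> H (a ° b)) ->
  (forall a b, H b -> eqmod k (f (a ° b)) (f a ° f b)) ->
  forall u, H u -> forall n, eqmod k (f (zp u n)) (zp (f u) n).
Proof.
move=> He HM hf u hu.
have Hpow m : H (zp u (Posz m)) by elim: m => [|m IH] //=; exact: HM.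
have f1 : eqmod k (f e) e.
  have := hf e e He; rewrite gmul1l /eqmod ginvM gmulA gmulVr gmul1l.
  by move=> /lcsV; rewrite ginvK ginv1 gmul1r.
have fV w : H w -> eqmod k (f (inv w)) (inv (f w)).
  move=> hw; apply: eqmod_invr; apply: eqmod_trans f1; apply: eqmod_sym.
  by have := hf (inv w) _ hw; rewrite gmulVl.
elim/zpow_nat_ind => [m|m IH]; last first.
  by rewrite !zpowN; apply: eqmod_trans (fV _ (Hpow m)) _; exact: eqmodV.
elim: m => [|m IH] //=.
by apply: eqmod_trans (hf _ _ (Hpow m)) _; exact: eqmodM (eqmod_refl _ _) IH.
Qed.

Fixpoint icomm (y : G) (l : seq G) : G :=
  if l is y' :: l' then cm y (icomm y' l') else y.

Lemma icomm_lcs y l : L (size l).+1 (icomm y l).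
Proof. by elim: l y => [|y' l IH] y //=; exact: commg_lcs (IH _). Qed.

Lemma hom_icomm f : hom f -> forall y l, f (icomm y l) = icomm (f y) (map f l).
Proof. by move=> hf y l; elim: l y => [|y' l IH] y //=; rewrite hom_commg // IH. Qed.

Definition zpow_pair (p : G * int) := zp p.1 p.2.
Definition exponent_prod (l : seq (G * int)) := foldr (fun p acc => (p.2 * acc)%R) 1%R l.

Lemma icommX_mod l y (a : int) :
  eqmod (size l).+2 (icomm (zp y a) (map zpow_pair l))
    (zp (icomm y (map fst l)) (a * exponent_prod l)%R).
Proof.
elim: l y a => [|[y' a'] l IH] y a /=; first by rewrite mulr1; exact: eqmod_refl.
set c := icomm y' (map fst l).
have hc : L (size l).+1 c by have := icomm_lcs y' (map fst l); rewrite size_map.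
apply: eqmod_trans (_ : eqmod _ _ (cm (zp y a) (zp c (a' * exponent_prod l)%R))) _.
  exact/commg_eqmod/IH.
apply: eqmod_trans (_ : eqmod _ _ (zp (cm (zp y a) c) (a' * exponent_prod l)%R)) _.
  by apply: (@eqmod_homX (L (size l).+1));
    [exact: lcs1 | exact: lcsM | move=> u v; exact: commgMr_mod | exact: hc].
apply: eqmod_trans (_ : eqmod _ _ (zp (zp (cm y c) a) (a' * exponent_prod l)%R)) _.
  apply: eqmodX; apply: (@eqmod_homX (fun _ => True) _ (fun g => cm g c)) => // u v _.
  exact: commgMl_mod.
rewrite zpowM mulrA; exact: eqmod_refl.
Qed.

Section IteratedCommutatorsSpan.
Variables (A : Type) (f : A -> G).
Hypothesis f_gen : forall g, gn (fun y => exists a, y = f a) g.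

Definition icomm_family k c :=
  exists a0 (l : seq A), size l = k /\ c = icomm (f a0) (map f l).

Lemma gen_icomm_lcs k w : gn (icomm_family k) w -> L k.+1 w.
Proof.
elim=> [|c [a0 [l [hl ->]]]|y y' _ h1 _ h2|y _ h1].
- exact: lcs1.
- by have := icomm_lcs (f a0) (map f l); rewrite size_map hl.
- exact: lcsM.
- exact: lcsV.
Qed.

(* The commutator of an element with a single iterated commutator of
   weight k + 1 is a combination of weight k + 2 ones, by bilinearity in g. *)
Lemma commg_icomm_mod k g c : icomm_family k c ->
  exists2 w, gn (icomm_family k.+1) w & eqmod k.+3 (cm g c) w.
Proof.
move=> hc; have hcL : L k.+1 c by apply: gen_icomm_lcs; apply: gen_in.
elim: (f_gen g) => [|y [a ->]|g1 g2 _ [u1 hu1 c1] _ [u2 hu2 c2]|g1 _ [u1 hu1 c1]].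
- by exists e; [exact: gen_one | rewrite comm1g; exact: eqmod_refl].
- exists (cm (f a) c); last exact: eqmod_refl.
  apply: gen_in; case: hc => [a0 [l [hl ->]]].
  by exists a, (a0 :: l); rewrite /= hl.
- exists (u1 ° u2); first exact: gen_mul.
  by apply: eqmod_trans (commgMl_mod _ _ hcL) _; exact: eqmodM.
- exists (inv u1); first exact: gen_inv.
  apply: eqmod_trans (_ : eqmod _ _ (inv (cm g1 c))) _; last exact: eqmodV.
  apply: eqmod_invr; apply: eqmod_sym.
  by have := commgMl_mod (inv g1) g1 hcL; rewrite gmulVl comm1g.
Qed.

(* Extension to every element of the generated subgroup, by bilinearity in c. *)
Lemma commg_gen_icomm_mod k g w : gn (icomm_family k) w ->
  exists2 w', gn (icomm_family k.+1) w' & eqmod k.+3 (cm g w) w'.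
Proof.
elim=> [|c hc|w1 w2 hw1 [u1 hu1 c1] hw2 [u2 hu2 c2]|w1 hw1 [u1 hu1 c1]].
- by exists e; [exact: gen_one | rewrite commg1; exact: eqmod_refl].
- exact: commg_icomm_mod.
- exists (u1 ° u2); first exact: gen_mul.
  by apply: eqmod_trans (commgMr_mod _ _ (gen_icomm_lcs hw2)) _; exact: eqmodM.
- exists (inv u1); first exact: gen_inv.
  apply: eqmod_trans (_ : eqmod _ _ (inv (cm g w1))) _; last exact: eqmodV.
  apply: eqmod_invr; apply: eqmod_sym.
  by have := commgMr_mod g (inv w1) (gen_icomm_lcs hw1); rewrite gmulVl commg1.
Qed.

Lemma lcs_gen_icomm_mod k z : L k.+1 z ->
  exists2 w, gn (icomm_family k) w & eqmod k.+2 z w.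
Proof.
elim: k z => [|k IH] z hz.
  exists z; last exact: eqmod_refl.
  by apply: gen_mono (f_gen z) => y [a ->]; exists a, [::].
elim: hz => [|y [g [h [hh ->]]]|z1 z2 _ [u1 hu1 c1] _ [u2 hu2 c2]|z1 _ [u1 hu1 c1]].
- by exists e; [exact: gen_one | exact: eqmod_refl].
- have [w hw cw] := IH h hh.
  have [w' hw' cw'] := commg_gen_icomm_mod g hw.
  by exists w' => //; apply: eqmod_trans cw'; exact: commg_eqmod.
- by exists (u1 ° u2); [exact: gen_mul | exact: eqmodM].
- by exists (inv u1); [exact: gen_inv | exact: eqmodV].
Qed.
End IteratedCommutatorsSpan.

Section LinearCombinations.
Variables (k : nat) (zs : 'I_k -> G) (sc : rat -> G -> G).
Hypothesis scD : forall i q q', sc q (zs i) ° sc q' (zs i) = sc (q + q')%R (zs i).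
Hypothesis sc0 : forall i, sc 0%R (zs i) = e.
Hypothesis sc_central : forall i q, central (sc q (zs i)).

Definition lincomb (qs : 'I_k -> rat) l := foldr (fun i acc => sc (qs i) (zs i) ° acc) e l.

Lemma lincomb_central qs l : central (lincomb qs l).
Proof. by elim: l => [|i l IH] /=; [exact: central1 | exact: centralM]. Qed.

Lemma lincombD qs qs' qs'' l : (forall i, qs'' i = (qs i + qs' i)%R) ->
  lincomb qs l ° lincomb qs' l = lincomb qs'' l.
Proof.
move=> h; elim: l => [|i l IH] /=; first by rewrite gmul1l.
rewrite -IH h -scD -!gmulA; congr (_ ° _).
by rewrite !gmulA lincomb_central.
Qed.

Lemma lincomb0 qs l : (forall i, qs i = 0%R) -> lincomb qs l = e.
Proof. by move=> h; elim: l => [|i l IH] //=; rewrite IH h sc0 gmul1l. Qed.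

Lemma lincomb_single j q l : uniq l ->
  lincomb (fun i => if i == j then q else 0%R) l = if j \in l then sc q (zs j) else e.
Proof.
elim: l => [|i l IH] //= /andP [hi hu]; rewrite IH // in_cons.
case: (eqVneq i j) hi => [->|hij] hi /=; first by rewrite (negbTE hi) gmul1r.
by rewrite sc0 gmul1l.
Qed.

Lemma gen_lincomb (T : G -> Prop) : (forall c, T c -> exists j q, c = sc q (zs j)) ->
  forall w, gn T w -> exists qs, w = lincomb qs (enum 'I_k).
Proof.
move=> hT w; elim=> [|c /hT [j [q ->]]|w1 w2 _ [q1 ->] _ [q2 ->]|w1 _ [q1 ->]].
- by exists (fun _ => 0%R); rewrite lincomb0.
- exists (fun i => if i == j then q else 0%R).
  by rewrite lincomb_single ?enum_uniq // mem_enum.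
- by exists (fun i => (q1 i + q2 i)%R); exact: lincombD.
- exists (fun i => (- q1 i)%R); symmetry; apply: ginv_uniq.
  by rewrite (lincombD (qs'' := fun _ => 0%R)) ?lincomb0 // => i; rewrite addNr.
Qed.
End LinearCombinations.

Section Dilations.
Variable delta : rat -> G -> G.
Hypothesis Hdelta : Qscalable mul e delta.
Local Open Scope ring_scope.

Lemma dilM (l m : rat) y : delta l (delta m y) = delta (l * m) y.
Proof. by case: Hdelta. Qed.
Lemma dil0 y : delta 0 y = e.
Proof. by case: Hdelta. Qed.
Lemma dil_hom q : hom (delta q).
Proof.
case: Hdelta => Haut _ _; have [->|hq] := eqVneq q 0; last by case: (Haut q hq).
by move=> a b; rewrite !dil0 gmul1l.
Qed.
Lemma dil_bij q : q != 0 -> bijective (delta q).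
Proof. by case: Hdelta => Haut _ _ hq; case: (Haut q hq). Qed.
Lemma dil_inj q : q != 0 -> injective (delta q).
Proof. by move=> /dil_bij /bij_inj. Qed.
Lemma dil1 y : delta 1 y = y.
Proof. by apply: (dil_inj (oner_neq0 _)); rewrite dilM mulr1. Qed.

Lemma V1_dil p q : V1 mul delta p -> V1 mul delta (delta q p).
Proof. by move=> hp t u; rewrite !dilM mulrDl hp. Qed.

Lemma V1_dil_int p : V1 mul delta p -> forall a : int, delta a%:~R p = zp p a.
Proof.
move=> hp; elim/zpow_nat_ind => [n|n IH].
  elim: n => [|n IH]; first by rewrite dil0.
  by rewrite -[n.+1]add1n PoszD intrD hp dil1 IH.
rewrite zpowN -IH; apply: ginv_uniq.
by rewrite -hp -(dil0 p) intrN addNr.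
Qed.

(* From now on G is nilpotent of step s = s' + 1: L (s' + 2) is trivial, and
   L (s' + 1) = G^(s) is central, so the congruences above become equalities. *)
Section LastTerm.
Variable s' : nat.
Hypothesis lcs_trivial : forall z, L s'.+2 z -> z = e.

Lemma eqmod_last u v : eqmod s'.+2 u v -> u = v.
Proof. by move=> /lcs_trivial h; apply: (@gmulIr _ _ (inv v)); rewrite h gmulVr. Qed.

Lemma central_last z : L s'.+1 z -> central z.
Proof.
move=> hz g; have /lcs_trivial h := commg_lcs g hz.
have hconj : g ° z ° inv g = z by apply: (@gmulIr _ _ (inv z)); rewrite gmulVr.
by rewrite -{1}hconj gmulVK.
Qed.

Lemma icommX_last l y (a : int) : size l = s' ->
  icomm (zp y a) (map zpow_pair l) = zp (icomm y (map fst l)) (a * exponent_prod l).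
Proof. by move=> hl; apply: eqmod_last; rewrite -hl; exact: icommX_mod. Qed.

Variables (r : nat) (x : 'I_r -> G).
Hypothesis x_V1 : forall i, V1 mul delta (x i).
Hypothesis x_gen : forall g, gn (fun y => exists (q : rat) (i : 'I_r), y = delta q (x i)) g.

Definition dil_gen (p : rat * 'I_r) := delta p.1 (x p.2).

Lemma dil_gen_spans g : gn (fun y => exists a, y = dil_gen a) g.
Proof. by apply: gen_mono (x_gen g) => y [q [i ->]]; exists (q, i). Qed.

Lemma last_gen_icomm z : L s'.+1 z -> gn (icomm_family dil_gen s') z.
Proof.
by move=> hz; have [w hw /eqmod_last ->] := lcs_gen_icomm_mod dil_gen_spans hz.
Qed.

Lemma dil_int_last w (t : int) : L s'.+1 w -> delta t%:~R w = zp w (t ^+ s'.+1).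
Proof.
move=> /last_gen_icomm; elim=> [|c [a0 [l [hl ->]]]|w1 w2 h1 IH1 h2 IH2|w1 h1 IH1].
- by rewrite hom1 ?zpow_e //; exact: dil_hom.
- have dil_t p : delta t%:~R (dil_gen p) = zp (dil_gen p) t.
    by apply: V1_dil_int; apply: V1_dil.
  rewrite hom_icomm; last exact: dil_hom.
  have -> : map (delta t%:~R) (map dil_gen l) = map zpow_pair [seq (dil_gen p, t) | p <- l].
    by rewrite -!map_comp; apply: eq_map => p /=; exact: dil_t.
  rewrite dil_t icommX_last ?size_map // -map_comp.
  have -> : exponent_prod [seq (dil_gen p, t) | p <- l] = t ^+ size l.
    by elim: (l) => [|p l' IH] //=; rewrite IH exprS.
  by rewrite hl exprS.
- by rewrite dil_hom IH1 IH2 zpowMl_central //; exact: central_last (gen_icomm_lcs h1).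
- by rewrite homV ?IH1 ?zpow_inv //; exact: dil_hom.
Qed.

Local Notation sg := (sigma mul inv e delta s'.+1).

Lemma sigmaE z (M A : int) q : L s'.+1 z -> 0 < M ->
  q * M%:~R ^+ s'.+1 = A%:~R -> sg q z = delta (M%:~R)^-1 (zp z A).
Proof.
move=> hz hM hA; have hM0 : M%:~R != 0 :> rat by rewrite intr_eq0 gt_eqF.
rewrite /sigma; case: eqP => [[s'0] | _].
  have := dil_int_last A hz; rewrite s'0 expr1 => <-.
  by rewrite dilM; congr delta; move: hA; rewrite s'0 expr1 => <-; field.
rewrite subn1 /=; set m := denq q; set n := numq q.
have hm : m%:~R != 0 :> rat by rewrite intr_eq0 gt_eqF // denq_gt0.
have hmM : m%:~R * M%:~R != 0 :> rat by rewrite mulf_neq0.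
apply: (dil_inj hmM); rewrite !dilM.
have -> : m%:~R * M%:~R * (m%:~R)^-1 = M%:~R :> rat by field.
have -> : m%:~R * M%:~R * (M%:~R)^-1 = m%:~R :> rat by field.
rewrite dil_int_last; last exact: lcsX.
rewrite dil_int_last; last exact: lcsX.
rewrite !zpowM; congr zp.
apply: (@intr_inj rat); rewrite !rmorphM !rmorphXn /= -hA.
by rewrite /n numqE -/m !exprS; ring.
Qed.

Lemma sigmaD z q q' : L s'.+1 z -> sg q z ° sg q' z = sg (q + q') z.
Proof.
move=> hz; set M := denq q * denq q'.
have hM : 0 < M by rewrite mulr_gt0 // denq_gt0.
set A := numq q * denq q' * M ^+ s'; set A' := numq q' * denq q * M ^+ s'.
have eA : q * M%:~R ^+ s'.+1 = A%:~R.
  by rewrite /A /M !rmorphM !rmorphXn !rmorphM /= !numqE !exprS; ring.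
have eA' : q' * M%:~R ^+ s'.+1 = A'%:~R.
  by rewrite /A' /M !rmorphM !rmorphXn !rmorphM /= !numqE !exprS; ring.
rewrite (sigmaE hz hM eA) (sigmaE hz hM eA') -dil_hom -zpowD.
by symmetry; apply: sigmaE => //; rewrite rmorphD /= -eA -eA' mulrDl.
Qed.

Lemma sigma0 z : L s'.+1 z -> sg 0 z = e.
Proof.
move=> hz; rewrite (@sigmaE z 1 0) ?mul0r //.
by rewrite hom1 //; exact: dil_hom.
Qed.

Lemma sigma_central z q : L s'.+1 z -> central (sg q z).
Proof.
move=> hz; set M := denq q; have hM : 0 < M by rewrite denq_gt0.
have eA : q * M%:~R ^+ s'.+1 = (numq q * M ^+ s')%:~R.
  by rewrite rmorphM rmorphXn /= numqE !exprS; ring.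
rewrite (sigmaE hz hM eA); apply: central_aut; first exact: dil_hom.
  by apply: dil_bij; rewrite invr_eq0 intr_eq0 gt_eqF.
by apply: zpow_central; apply: central_last.
Qed.

Lemma common_denominator (l : seq rat) : exists2 M : int, 0 < M &
  forall q, q \in l -> (numq (q * M%:~R))%:~R = q * M%:~R.
Proof.
have numq_intr (u : rat) (a : int) : u = a%:~R -> (numq u)%:~R = u.
  by move=> ->; rewrite numq_int.
elim: l => [|q l [M hM hl]]; first by exists 1.
exists (denq q * M); first by rewrite mulr_gt0 // denq_gt0.
move=> q0; rewrite in_cons => /orP [/eqP ->|hq0].
  by apply: (numq_intr _ (numq q * M)); rewrite !rmorphM /= numqE; ring.
apply: (numq_intr _ (denq q * numq (q0 * M%:~R))).
by rewrite !rmorphM /= hl //; ring.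
Qed.

Definition scalar_prod (l : seq (rat * 'I_r)) := foldr (fun p acc => p.1 * acc) 1 l.

Lemma exponent_prod_numq (M : int) l :
  (forall p, p \in l -> (numq (p.1 * M%:~R))%:~R = p.1 * M%:~R) ->
  (exponent_prod [seq (x p.2, numq (p.1 * M%:~R)) | p <- l])%:~R
    = scalar_prod l * M%:~R ^+ size l.
Proof.
elim: l => [|p l IH] h /=; first by rewrite mulr1.
rewrite rmorphM /= h ?mem_head // IH; first by rewrite exprS; ring.
by move=> p' hp'; apply: h; rewrite in_cons hp' orbT.
Qed.

Lemma icomm_dil_gen a0 l : size l = s' ->
  icomm (dil_gen a0) (map dil_gen l)
  = sg (a0.1 * scalar_prod l) (icomm (x a0.2) (map x (map snd l))).
Proof.
move=> hl; have [M hM hMl] := common_denominator (a0.1 :: map fst l).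
set ns := [seq (x p.2, numq (p.1 * M%:~R)) | p <- l].
set z := icomm (x a0.2) (map x (map snd l)).
have dil_M p : p.1 \in a0.1 :: map fst l ->
    delta M%:~R (dil_gen p) = zp (x p.2) (numq (p.1 * M%:~R)).
  by move=> hp; rewrite /dil_gen dilM -V1_dil_int // (hMl _ hp) mulrC.
have hz : L s'.+1 z by have := icomm_lcs (x a0.2) (map x (map snd l)); rewrite !size_map hl.
have dil_M_icomm : delta M%:~R (icomm (dil_gen a0) (map dil_gen l))
    = zp z (numq (a0.1 * M%:~R) * exponent_prod ns).
  rewrite hom_icomm ?dil_M ?mem_head //; last exact: dil_hom.
  have -> : map (delta M%:~R) (map dil_gen l) = map zpow_pair ns.
    rewrite -!map_comp; apply/eq_in_map => p hp /=.
    by rewrite dil_M // in_cons map_f ?orbT.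
  by rewrite icommX_last ?size_map // /z -!map_comp.
have eA : a0.1 * scalar_prod l * M%:~R ^+ s'.+1
    = (numq (a0.1 * M%:~R) * exponent_prod ns)%:~R.
  rewrite rmorphM /= (hMl _ (mem_head _ _)) exponent_prod_numq ?hl.
    by rewrite exprS; ring.
  by move=> p hp; apply: hMl; rewrite in_cons map_f ?orbT.
rewrite (sigmaE hz hM eA) -dil_M_icomm dilM mulVf ?dil1 //.
by rewrite intr_eq0 gt_eqF.
Qed.

Lemma last_term_fin_dim : fin_dim_lcs mul inv e delta s'.+1.
Proof.
pose I := ('I_r * s'.-tuple 'I_r)%type.
pose zs (j : 'I_#|{: I}|) := icomm (x (enum_val j).1) (map x (enum_val j).2).
have zs_lcs j : L s'.+1 (zs j).
  by have := icomm_lcs (x (enum_val j).1) (map x (enum_val j).2); rewrite size_map size_tuple.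
exists #|{: I}|, zs; split => // z /last_gen_icomm hz.
apply: (gen_lincomb _ _ _ _ hz) => [i q q'|i|i q|c [a0 [l [hl ->]]]].
- exact: sigmaD.
- exact: sigma0.
- exact: sigma_central.
- have ht : size (map snd l) == s' by rewrite size_map hl.
  exists (enum_rank ((a0.2, Tuple ht) : I)), (a0.1 * scalar_prod l).
  by rewrite /zs enum_rankK /=; exact: icomm_dil_gen.
Qed.

End LastTerm.
End Dilations.
End NilpotentGroup.

Theorem mainTheorem6 (G : Type) (mul : G -> G -> G) (inv : G -> G) (e : G)
  (HG : is_group mul inv e) (delta : rat -> G -> G)
  (Hdelta : Qscalable mul e delta) (s : nat)
  (Hstep : nilpotent_step mul inv e s)
  (r : nat) (x : 'I_r -> G) (HxV1 : forall i, V1 mul delta (x i))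
  (Hgen : forall g, gen mul inv e
            (fun y => exists (q : rat) (i : 'I_r), y = delta q (x i)) g) :
  fin_dim_lcs mul inv e delta s.
Proof.
case: Hstep => lcs_trivial [z0 [hz0 z0_ne1]].
case: s lcs_trivial hz0 => [|s'] lcs_trivial hz0.
  by case: z0_ne1; apply: lcs_trivial.
exact: (last_term_fin_dim HG Hdelta lcs_trivial HxV1 Hgen).
Qed.
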